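(* For any simple undirected graph $G$, the quantity $$\Lambda_1=\sum_{\{st,uv\}\in Q}\big(a_{su}(k_t+k_v)+a_{sv}(k_t+k_u)+a_{tu}(k_s+k_v)+a_{tv}(k_s+k_u)\big)$$ satisfies $$\Lambda_1=\sum_{st\in E}\Big((k_t-1)(\xi(s)-k_t)+(k_s-1)(\xi(t)-k_s)-2S_{s,t}\Big).$$
   Context: $a_{ij}$ adjacency entries, $k_x$ degree, $\Gamma(x)$ neighbourhood, $\xi(s)=\sum_{t\in\Gamma(s)}k_t$, $c(s,t)=\Gamma(s)\cap\Gamma(t)$, $S_{s,t}=\sum_{u\in c(s,t)}k_u$. $Q$ is the set of unordered pairs $\{st,uv\}$ of edges with $s,t,u,v$ pairwise distinct. *)

From mathcomp Require Import all_boot all_order all_algebra.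
Set Implicit Arguments. Unset Strict Implicit. Unset Printing Implicit Defensive.
Import GRing.Theory Num.Theory.
Local Open Scope ring_scope.

(* A simple undirected graph: vertex type T : finType, adjacency g : rel T,
   assumed symmetric and irreflexive (stated as hypotheses in the theorem). *)
Section Graph.
Variables (T : finType) (g : rel T).

Definition adj (x y : T) : int := (g x y : nat)%:Z.
Definition nbhd (x : T) : {set T} := [set y | g x y].
Definition deg (x : T) : int := (#|nbhd x|)%:Z.
Definition xi (s : T) : int := \sum_(t in nbhd s) deg t.
Definition common (s t : T) : {set T} := nbhd s :&: nbhd t.
Definition Sst (s t : T) : int := \sum_(u in common s t) deg u.

Definition edges : {set {set T}} :=
  [set e : {set T} | [exists s, exists t, g s t && (e == [set s; t])]].

Definition Qset : {set {set {set T}}} :=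
  [set P : {set {set T}} | [exists e1, exists e2,
     [&& e1 \in edges, e2 \in edges, [disjoint e1 & e2] & P == [set e1; e2]]]].

(* For e1 = {s,t}, e2 = {u,v}:
   a_su(k_t+k_v)+a_sv(k_t+k_u)+a_tu(k_s+k_v)+a_tv(k_s+k_u)
   = sum_{x in e1} sum_{y in e2} a_xy (k_{e1\x} + k_{e2\y}). *)
Definition term (e1 e2 : {set T}) : int :=
  \sum_(x in e1) \sum_(y in e2)
     adj x y * (\sum_(z in e1 :\ x) deg z + \sum_(w in e2 :\ y) deg w).

(* The summand for an element P = {e1,e2} of Q; the (symmetric) term is
   evaluated once, with the labelling fixed by the enumeration order. *)
Definition Qterm (P : {set {set T}}) : int :=
  \sum_(e1 in P) \sum_(e2 in P | (enum_rank e1 < enum_rank e2)%N) term e1 e2.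

Definition Lambda1 : int := \sum_(P in Qset) Qterm P.

Definition edge_term (s t : T) : int :=
  (deg t - 1) * (xi s - deg t) + (deg s - 1) * (xi t - deg s) - 2 * Sst s t.

(* sum over edges st in E: each unordered edge {s,t} counted once via
   the ordered representative with enum_rank s < enum_rank t *)
Definition Lambda1_rhs : int :=
  \sum_(p : T * T | g p.1 p.2 && (enum_rank p.1 < enum_rank p.2)%N)
     edge_term p.1 p.2.
End Graph.

From mathcomp Require Import all_boot all_order all_algebra.
From mathcomp Require Import ring.
Set Implicit Arguments. Unset Strict Implicit. Unset Printing Implicit Defensive.
Import GRing.Theory Num.Theory.
Local Open Scope ring_scope.

(* Every element {st, uv} of Q arises from exactly 8 ordered pairs of arcs ((s,t),(u,v))
   with disjoint ends, and these 8 relabellings permute the eight products a_xy k_z of its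
   summand. Hence Lambda_1 is the number of paths t - s - u - v weighted by k_t. Grouping
   the paths by their middle arc (s,u), t ranges over Gamma(s) \ {u} and v over
   Gamma(u) \ {s,t}, a set of k_u - 1 - a_ut elements; this gives
   (k_u - 1)(xi(s) - k_u) - S_{s,u}, and the two orientations of an edge st give its summand. *)

Lemma big_involutive (R : Type) (idx : R) (op : Monoid.com_law idx)
    (I : finType) (P : pred I) (f : I -> I) (F : I -> R) :
  involutive f -> (forall i, P (f i) = P i) ->
  \big[op/idx]_(i | P i) F (f i) = \big[op/idx]_(i | P i) F i.
Proof. by move=> fK Pf; rewrite [RHS](reindex_inj (inv_inj fK)); apply: eq_bigl. Qed.

Definition swap_pair {X : Type} (p : X * X) : X * X := (p.2, p.1).

Lemma swap_pairK (X : Type) : involutive (@swap_pair X).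
Proof. by case. Qed.

Definition ends {X : finType} (p : X * X) : {set X} := [set p.1; p.2].

Lemma ends_swap (X : finType) (p : X * X) : ends (swap_pair p) = ends p.
Proof. exact: setUC. Qed.

Lemma disjoint_set2 (X : finType) (s t u v : X) :
  [disjoint [set s; t] & [set u; v]] = [&& s != u, s != v, t != u & t != v].
Proof. by rewrite disjoints_subset subUset !sub1set !inE !negb_or !andbA. Qed.

Lemma sumr_set2 (V : nmodType) (X : finType) (a b : X) (F : X -> V) :
  a != b -> \sum_(x in [set a; b]) F x = F a + F b.
Proof. by move=> ab; rewrite big_setU1 ?big_set1 // inE. Qed.

Lemma set2D1l (X : finType) (a b : X) : a != b -> [set a; b] :\ a = [set b].
Proof. by move=> ab; rewrite setU1K // inE. Qed.

Lemma set2D1r (X : finType) (a b : X) : a != b -> [set a; b] :\ b = [set a].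
Proof. by move=> ab; rewrite setUC setU1K // inE eq_sym. Qed.

Lemma big_pairE (R : Type) (idx : R) (op : Monoid.com_law idx) (I J : finType)
    (F : I * J -> R) :
  \big[op/idx]_(x : I * J) F x = \big[op/idx]_i \big[op/idx]_j F (i, j).
Proof. by rewrite pair_bigA; apply: eq_bigr => -[]. Qed.

Section SymmetricIrreflexiveRelation.
Variables (X : finType) (R : rel X).
Hypotheses (Rsym : symmetric R) (Rirr : irreflexive R).

Lemma rel_neq {x y} : R x y -> x != y.
Proof. by apply: contraTneq => ->; rewrite Rirr. Qed.

Lemma sum_arcs_ranked (V : nmodType) (h : X -> X -> V) :
    (forall x y, h x y = h y x) ->
  \sum_(p | R p.1 p.2) h p.1 p.2 =
  (\sum_(p | R p.1 p.2 && (enum_rank p.1 < enum_rank p.2)%N) h p.1 p.2) *+ 2.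
Proof.
move=> hC; rewrite (bigID (fun p => enum_rank p.1 < enum_rank p.2)%N) /= mulr2n.
congr (_ + _); rewrite (reindex_inj (inv_inj (@swap_pairK X))) /=.
apply: eq_big => [[x y]|[x y] _] /=; last exact: hC.
rewrite Rsym -leqNgt leq_eqVlt; case Rxy: (R x y) => //=.
by rewrite val_eqE (inj_eq enum_rank_inj) (negbTE (rel_neq Rxy)).
Qed.

Lemma sum_edges_arcs (V : nmodType) (F : {set X} -> V) :
  (\sum_(e in edges R) F e) *+ 2 = \sum_(p | R p.1 p.2) F (ends p).
Proof.
rewrite (partition_big ends (mem (edges R))) /=; last first.
  move=> [x y] /= Rxy; rewrite inE.
  by apply/existsP; exists x; apply/existsP; exists y; rewrite Rxy eqxx.
rewrite -sumrMnl; apply: eq_bigr => e.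
rewrite inE => /existsP[x /existsP[y /andP[Rxy /eqP->]]].
transitivity (\sum_(p in pred2 (x, y) (y, x)) F [set x; y]).
  by rewrite sumr_const card2 xpair_eqE (negbTE (rel_neq Rxy)).
symmetry; apply: eq_big => [[a b]|[a b] /andP[_ /eqP->] //] /=.
rewrite !inE !xpair_eqE /ends /=; apply/idP/idP.
  case/andP=> Rab /eqP Eab.
  have : a \in [set x; y] by rewrite -Eab set21.
  have : b \in [set x; y] by rewrite -Eab set22.
  rewrite !inE => /orP[]/eqP Eb /orP[]/eqP Ea; subst a b; rewrite ?eqxx ?orbT //;
    by rewrite Rirr in Rab.
by case/orP=> /andP[/eqP-> /eqP->]; rewrite ?Rxy ?eqxx // Rsym Rxy setUC eqxx.
Qed.

End SymmetricIrreflexiveRelation.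

Section Graph.
Variables (T : finType) (g : rel T).
Hypotheses (gsym : symmetric g) (girr : irreflexive g).

Lemma adjC x y : adj g x y = adj g y x.
Proof. by rewrite /adj gsym. Qed.

Definition disjoint_edges (e1 e2 : {set T}) : bool :=
  [&& e1 \in edges g, e2 \in edges g & [disjoint e1 & e2]].

Lemma Qset_edges : Qset g = edges disjoint_edges.
Proof.
apply/setP => P; rewrite !inE; apply: eq_existsb => e1; apply: eq_existsb => e2.
by rewrite /disjoint_edges !andbA.
Qed.

Lemma disjoint_edges_sym : symmetric disjoint_edges.
Proof. by move=> e1 e2; rewrite /disjoint_edges andbCA disjoint_sym. Qed.

Lemma disjoint_edges_irr : irreflexive disjoint_edges.
Proof.
move=> e; apply/and3P => -[+ _]; rewrite inE => /existsP[x /existsP[y /andP[_ /eqP->]]].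
by move/pred0P/(_ x); rewrite /= !inE eqxx.
Qed.

Lemma term_sym e1 e2 : term g e1 e2 = term g e2 e1.
Proof.
rewrite /term exchange_big; apply: eq_bigr => y _; apply: eq_bigr => x _.
by rewrite adjC addrC.
Qed.

Lemma Qterm_set2 e1 e2 : e1 != e2 -> Qterm g [set e1; e2] = term g e1 e2.
Proof.
move=> ne; rewrite /Qterm sumr_set2 // !big_mkcondr /= !sumr_set2 // !ltnn.
case: ltngtP => [_|_|/val_inj/enum_rank_inj eq]; rewrite ?addr0 ?add0r //.
  exact: term_sym.
by rewrite eq eqxx in ne.
Qed.

Lemma Lambda1_disjoint_edges :
  Lambda1 g *+ 2 =
  \sum_(e1 in edges g) \sum_(e2 in edges g | [disjoint e1 & e2]) term g e1 e2.
Proof.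
rewrite /Lambda1 Qset_edges (sum_edges_arcs disjoint_edges_sym disjoint_edges_irr).
rewrite [RHS]pair_big_dep; apply: eq_big => // x /(rel_neq disjoint_edges_irr).
exact: Qterm_set2.
Qed.

Definition disjoint_arcs (p q : T * T) : bool :=
  [&& g p.1 p.2, g q.1 q.2 & [disjoint ends p & ends q]].

Lemma Lambda1_disjoint_arcs :
  Lambda1 g *+ 8 =
  \sum_(x | disjoint_arcs x.1 x.2) term g (ends x.1) (ends x.2).
Proof.
rewrite -[8%N]/(2 * 2 * 2)%N !mulrnA Lambda1_disjoint_edges (sum_edges_arcs gsym girr).
transitivity (\sum_(p | g p.1 p.2)
  \sum_(q | g q.1 q.2 && [disjoint ends p & ends q]) term g (ends p) (ends q)).
  rewrite -sumrMnl; apply: eq_bigr => p _.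
  by rewrite big_mkcondr (sum_edges_arcs gsym girr) [RHS]big_mkcondr.
by rewrite pair_big_dep.
Qed.

Lemma disjoint_arcs_swapl p q : disjoint_arcs (swap_pair p) q = disjoint_arcs p q.
Proof. by rewrite /disjoint_arcs ends_swap /= gsym. Qed.

Lemma disjoint_arcs_swapr p q : disjoint_arcs p (swap_pair q) = disjoint_arcs p q.
Proof. by rewrite /disjoint_arcs ends_swap /= (gsym q.2). Qed.

Lemma disjoint_arcs_sym : symmetric disjoint_arcs.
Proof. by move=> p q; rewrite /disjoint_arcs andbCA disjoint_sym. Qed.

Section DisjointArcsSum.
Variable F : T * T -> T * T -> int.

Lemma sum_disjoint_arcs_swapl :
  \sum_(x | disjoint_arcs x.1 x.2) F (swap_pair x.1) x.2 =
  \sum_(x | disjoint_arcs x.1 x.2) F x.1 x.2.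
Proof.
apply: (big_involutive _ (fun x => F x.1 x.2) (f := fun x => (swap_pair x.1, x.2))).
  by case=> p q; rewrite /= swap_pairK.
by case=> p q; exact: disjoint_arcs_swapl.
Qed.

Lemma sum_disjoint_arcs_swapr :
  \sum_(x | disjoint_arcs x.1 x.2) F x.1 (swap_pair x.2) =
  \sum_(x | disjoint_arcs x.1 x.2) F x.1 x.2.
Proof.
apply: (big_involutive _ (fun x => F x.1 x.2) (f := fun x => (x.1, swap_pair x.2))).
  by case=> p q; rewrite /= swap_pairK.
by case=> p q; exact: disjoint_arcs_swapr.
Qed.

Lemma sum_disjoint_arcs_sym :
  \sum_(x | disjoint_arcs x.1 x.2) F x.2 x.1 =
  \sum_(x | disjoint_arcs x.1 x.2) F x.1 x.2.
Proof.
apply: (big_involutive _ (fun x => F x.1 x.2) (f := fun x => (x.2, x.1))).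
  by case.
by case=> p q; exact: disjoint_arcs_sym.
Qed.

End DisjointArcsSum.

Definition link_weight (p q : T * T) : int := adj g p.1 q.1 * (deg g p.2 + deg g q.2).

Lemma term_ends p q : p.1 != p.2 -> q.1 != q.2 ->
  term g (ends p) (ends q) =
  link_weight p q + link_weight p (swap_pair q)
  + link_weight (swap_pair p) q + link_weight (swap_pair p) (swap_pair q).
Proof.
case: p q => [s t] [u v] /= st uv.
rewrite /term /ends /= !sumr_set2 // set2D1l // set2D1r // set2D1l // set2D1r //.
by rewrite !big_set1 /link_weight /=; ring.
Qed.

Lemma sum_term_ends :
  \sum_(x | disjoint_arcs x.1 x.2) term g (ends x.1) (ends x.2) =
  (\sum_(x | disjoint_arcs x.1 x.2) adj g x.1.1 x.2.1 * deg g x.1.2) *+ 8.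
Proof.
have sum_link : \sum_(x | disjoint_arcs x.1 x.2) link_weight x.1 x.2 =
    (\sum_(x | disjoint_arcs x.1 x.2) adj g x.1.1 x.2.1 * deg g x.1.2) *+ 2.
  rewrite /link_weight; under eq_bigr do rewrite mulrDr.
  rewrite big_split mulr2n /=; congr (_ + _).
  rewrite -(sum_disjoint_arcs_sym (fun p q => adj g p.1 q.1 * deg g q.2)) /=.
  by apply: eq_bigr => x _; rewrite adjC.
rewrite (eq_bigr (fun x => link_weight x.1 x.2 + link_weight x.1 (swap_pair x.2)
    + link_weight (swap_pair x.1) x.2 + link_weight (swap_pair x.1) (swap_pair x.2))).
  rewrite !big_split /= (sum_disjoint_arcs_swapr link_weight).
  rewrite (sum_disjoint_arcs_swapl link_weight).
  rewrite (sum_disjoint_arcs_swapl (fun p q => link_weight p (swap_pair q))).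
  by rewrite (sum_disjoint_arcs_swapr link_weight) sum_link -!mulrnDr.
by move=> x /and3P[gp gq _]; apply: term_ends; apply: (rel_neq girr).
Qed.

Definition arc_term (s u : T) : int :=
  (deg g u - 1) * (xi g s - deg g u) - Sst g s u.

Lemma edge_termE s t : edge_term g s t = arc_term s t + arc_term t s.
Proof. by rewrite /edge_term /arc_term /Sst /common setIC; ring. Qed.

Lemma disjoint_arcs_through s t u v : g s u ->
  disjoint_arcs (s, t) (u, v) = (t \in nbhd g s :\ u) && (v \in nbhd g u :\ s :\ t).
Proof.
move=> gsu; rewrite /disjoint_arcs /ends disjoint_set2 !inE (rel_neq girr gsu) /=.
rewrite !(eq_sym v); case: (g s t); case: (g u v); case: (t != u);
  by rewrite /= ?andbT ?andbF // andbC.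
Qed.

Lemma card_nbhdD1D1 s t u : s \in nbhd g u -> t != s ->
  #|nbhd g u :\ s :\ t|%:Z = deg g u - 1 - adj g u t.
Proof.
move=> su ts; rewrite /deg (cardsD1 s (nbhd g u)) (cardsD1 t (nbhd g u :\ s)) su.
by rewrite !inE ts /adj /= !PoszD; ring.
Qed.

Lemma sum_paths_through s u : g s u ->
  \sum_t \sum_(v | disjoint_arcs (s, t) (u, v)) deg g t = arc_term s u.
Proof.
move=> gsu.
have su : s \in nbhd g u by rewrite inE gsym.
transitivity (\sum_(t in nbhd g s :\ u) deg g t * (deg g u - 1 - adj g u t)).
  rewrite [RHS]big_mkcond; apply: eq_bigr => t _.
  under eq_bigl => v do rewrite disjoint_arcs_through //.
  case: ifP => [tsu|_]; last by rewrite big_pred0.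
  have ts : t != s by apply: contraTneq tsu => ->; rewrite !inE girr andbF.
  by rewrite sumr_const -(card_nbhdD1D1 su ts) -mulr_natr natz.
have sum_deg : \sum_(t in nbhd g s :\ u) deg g t = xi g s - deg g u.
  rewrite /xi [in RHS](bigD1 u) ?inE //= addrC addrK.
  by apply: eq_bigl => t; rewrite !inE andbC.
have sum_common : \sum_(t in nbhd g s :\ u) deg g t * adj g u t = Sst g s u.
  rewrite /Sst big_mkcond [RHS]big_mkcond; apply: eq_bigr => t _.
  rewrite !inE /adj; case: eqVneq => [->|_]; first by rewrite girr andbF.
  by case: (g s t); case: (g u t); rewrite ?mulr1 ?mulr0.
rewrite /arc_term -sum_deg -sum_common mulr_sumr -sumrB.
by apply: eq_bigr => t _; ring.
Qed.

Lemma sum_disjoint_arcs_paths :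
  \sum_(x | disjoint_arcs x.1 x.2) adj g x.1.1 x.2.1 * deg g x.1.2 =
  \sum_(p | g p.1 p.2) arc_term p.1 p.2.
Proof.
rewrite big_mkcond [RHS]big_mkcond !big_pairE; apply: eq_bigr => s _.
under eq_bigr do rewrite big_pairE.
rewrite exchange_big; apply: eq_bigr => u _.
transitivity (adj g s u * \sum_t \sum_(v | disjoint_arcs (s, t) (u, v)) deg g t).
  rewrite mulr_sumr; apply: eq_bigr => t _; rewrite mulr_sumr [RHS]big_mkcond.
  by apply: eq_bigr => v _; case: ifP; rewrite ?mulr0.
rewrite /adj /=; case: ifP => gsu; last by rewrite mul0r.
by rewrite mul1r sum_paths_through.
Qed.

Lemma Lambda1_rhs_arcs :
  Lambda1_rhs g *+ 2 = (\sum_(p | g p.1 p.2) arc_term p.1 p.2) *+ 2.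
Proof.
rewrite /Lambda1_rhs -(sum_arcs_ranked gsym girr); last by move=> s t; rewrite !edge_termE addrC.
under eq_bigr do rewrite edge_termE.
rewrite big_split mulr2n /=; congr (_ + _).
apply: (big_involutive _ (fun p => arc_term p.1 p.2) (@swap_pairK _)) => p.
exact: gsym.
Qed.

End Graph.

Theorem proposition14 (T : finType) (g : rel T)
  (gsym : symmetric g) (girr : irreflexive g) :
  Lambda1 g = Lambda1_rhs g.
Proof.
have arcs : Lambda1 g *+ 8 = (\sum_(p | g p.1 p.2) arc_term g p.1 p.2) *+ 8.
  rewrite (Lambda1_disjoint_arcs gsym girr) (sum_term_ends gsym girr).
  by rewrite (sum_disjoint_arcs_paths gsym girr).
apply: (@pmulrnI _ 8) => //=; rewrite arcs -[8%N]/(2 * 4)%N !mulrnA.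
by rewrite (Lambda1_rhs_arcs gsym girr).
Qed.
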